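(* If $d$ is a squarefree integer such that $H^d(\mathbb{Q})\neq\emptyset$, then $H^d(\mathbb{Q})$ is infinite.
   Context: $H^d$ denotes the genus one curve $d y^2=(x^2-x-3)(x^2+2x-12)$ (smooth projective model). *)

From mathcomp Require Import all_boot all_order all_algebra.
Set Implicit Arguments. Unset Strict Implicit. Unset Printing Implicit Defensive.
Import Order.TTheory GRing.Theory Num.Theory.
Local Open Scope ring_scope.

Definition squarefree_int (d : int) : Prop :=
  d != 0 /\ forall n : int, (n ^+ 2 %| d)%Z -> n ^+ 2 = 1.

Definition Fhom (X Z : rat) : rat :=
  (X ^+ 2 - X * Z - 3 * Z ^+ 2) * (X ^+ 2 + 2 * X * Z - 12 * Z ^+ 2).

(* The smooth projective model of  d y^2 = (x^2-x-3)(x^2+2x-12)  is the curve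
   d Y^2 = F(X,Z) in the weighted projective plane P(1,2,1) (the quartic has
   distinct roots, so this curve is smooth).  A rational point is represented
   by a nonzero triple (X,Y,Z) of rationals on the curve, up to the weighted
   scaling (X,Y,Z) ~ (l X, l^2 Y, l Z), l <> 0. *)
Definition Hd_triple (d : int) (p : rat * rat * rat) : Prop :=
  let: (X, Y, Z) := p in
  (X, Y, Z) != (0, 0, 0) /\ d%:~R * Y ^+ 2 = Fhom X Z.

Definition wequiv (p q : rat * rat * rat) : Prop :=
  let: (X, Y, Z) := p in
  exists l : rat, l != 0 /\ q = (l * X, l ^+ 2 * Y, l * Z).

Definition Hd_nonempty (d : int) : Prop := exists p, Hd_triple d p.

Definition Hd_infinite (d : int) : Prop :=
  forall s : seq (rat * rat * rat),
    exists p, Hd_triple d p /\ forall q, q \in s -> ~ wequiv q p.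

(* Let F(x, z) = (x^2 - x z - 3 z^2)(x^2 + 2 x z - 12 z^2).  There are integral binary
   forms A, B of degree 9 and W of degree 16 with F(A, B) = F W^2, so
   (X : Y : Z) |-> (A(X, Z) : Y W(X, Z) : B(X, Z)) maps H^d(Q) to itself for every d.
   Two Bezout identities U A + V B = R x^17 and U' A + V' B = R z^17, with R = 2^14 3^8 13,
   show that for coprime x, z the common factor of A(x, z) and B(x, z) divides R, and then
   that the height max(|x|, |z|) strictly increases when (x, z) is replaced by the reduced
   pair (A, B) / gcd(A, B): directly once the height is large, by a finite computation
   below that.  Hence the orbit of a rational point has strictly increasing heights and
   consists of infinitely many pairwise inequivalent points. *)

From Stdlib Require Import ZArith Znumtheory Zpow_facts Classical_Prop.
From HB Require Import structures.
From mathcomp Require Import all_boot all_order all_algebra ssrZ ring zify.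
Import Order.TTheory GRing.Theory Num.Theory.

Set Implicit Arguments.
Unset Strict Implicit.

Lemma functional_rel_bounded (T : eqType) (R : T -> nat -> Prop) (s : seq T) :
  (forall q m n, R q m -> R q n -> m = n) ->
  exists N, forall q n, q \in s -> R q n -> (n < N)%N.
Proof.
move=> R_fun; elim: s => [|q s [N N_bound]]; first by exists 0%N.
have [[m Rqm] | no_m] := classic (exists m, R q m).
  exists (maxn N m.+1) => q' n; rewrite inE => /orP [/eqP -> /(R_fun _ _ _ Rqm) -> | q'_in Rq'n].
    by rewrite leq_max ltnSn orbT.
  by rewrite leq_max (N_bound q' n q'_in Rq'n).
exists N => q' n; rewrite inE => /orP [/eqP -> Rqn | ]; last exact: N_bound.
by case: no_m; exists n.
Qed.

Local Open Scope Z_scope.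

(* [heval [:: a_0; a_1; ...; a_n] x z] is the binary form sum_i a_i x^i z^(n-i). *)
Fixpoint heval (c : seq Z) (x z : Z) : Z :=
  if c is a :: c' then a * z ^ Z.of_nat (size c') + x * heval c' x z else 0.

Definition coef_norm (c : seq Z) : Z := foldr (fun a s => Z.abs a + s) 0 c.

Definition height (x z : Z) : Z := Z.max (Z.abs x) (Z.abs z).

Lemma heval_bound c x z M : Z.abs x <= M -> Z.abs z <= M ->
  Z.abs (heval c x z) <= coef_norm c * M ^ Z.of_nat (size c).-1.
Proof.
move=> le_xM le_zM; elim: c => [|a c IH] /=; first lia.
have M_ge0 : 0 <= M by lia.
have le_az : Z.abs (a * z ^ Z.of_nat (size c)) <= Z.abs a * M ^ Z.of_nat (size c).
  rewrite Z.abs_mul Z.abs_pow; apply: Z.mul_le_mono_nonneg_l; first lia.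
  by apply: Z.pow_le_mono_l; lia.
have le_xc : Z.abs (x * heval c x z) <= coef_norm c * M ^ Z.of_nat (size c).
  case: c IH {le_az} => [|b c] IH; first by rewrite /=; lia.
  rewrite -[(size (b :: c)).-1]/(size c) in IH.
  rewrite [size _]/= Z.abs_mul Nat2Z.inj_succ Z.pow_succ_r; last lia.
  have := Z.mul_le_mono_nonneg _ _ _ _ (Z.abs_nonneg x) le_xM (Z.abs_nonneg _) IH.
  move/Z.le_trans; apply; apply: Z.eq_le_incl; ring.
have := Z.abs_triangle (a * z ^ Z.of_nat (size c)) (x * heval c x z); lia.
Qed.

Lemma gcd_dvd_of_bezout a b x z r u v u' v' n : 0 <= n -> Z.gcd x z = 1 ->
  u * a + v * b = r * x ^ n -> u' * a + v' * b = r * z ^ n -> (Z.gcd a b | r).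
Proof.
move=> n_ge0 /Zgcd_1_rel_prime xz_coprime bez_x bez_z.
have dvd_g (s t : Z) : (Z.gcd a b | s * a + t * b).
  by apply: Z.divide_add_r; apply: Z.divide_mul_r;
    [apply: Z.gcd_divide_l | apply: Z.gcd_divide_r].
have := Z.gcd_greatest _ _ _ (dvd_g u v) (dvd_g u' v').
rewrite bez_x bez_z Z.gcd_mul_mono_l.
have /Zgcd_1_rel_prime -> := rel_prime_Zpower _ _ _ _ n_ge0 n_ge0 xz_coprime.
by rewrite Z.mul_1_r => /Z.divide_abs_r.
Qed.

Lemma height_gt_of_bezout a b u v t r Su Sv M k : 0 <= k -> 0 < r -> 0 < M ->
  Z.abs t = M -> u * a + v * b = r * t ^ (2 * k + 1) ->
  Z.abs u <= Su * M ^ k -> Z.abs v <= Sv * M ^ k -> Su + Sv < M ^ k ->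
  r * M < height a b.
Proof.
move=> k_ge0 r_gt0 M_gt0 abs_t bez le_u le_v lt_S.
set P := M ^ k; set mx := height a b.
have P_gt0 : 0 < P by apply: Z.pow_pos_nonneg.
have abs_bez : Z.abs (u * a + v * b) = r * M * P * P.
  rewrite bez Z.abs_mul Z.abs_pow abs_t (_ : 2 * k + 1 = k + k + 1); last lia.
  rewrite !Z.pow_add_r ?Z.pow_1_r -/P; lia.
have le_a : Z.abs a <= mx by apply: Z.le_max_l.
have le_b : Z.abs b <= mx by apply: Z.le_max_r.
have le_bez : r * M * P * P <= (P - 1) * P * mx.
  have le_ua := Z.mul_le_mono_nonneg _ _ _ _ (Z.abs_nonneg u) le_u (Z.abs_nonneg a) le_a.
  have le_vb := Z.mul_le_mono_nonneg _ _ _ _ (Z.abs_nonneg v) le_v (Z.abs_nonneg b) le_b.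
  have := Z.abs_triangle (u * a) (v * b); rewrite !Z.abs_mul abs_bez -/mx => le_tri.
  have mx_ge0 : 0 <= P * mx by apply: Z.mul_nonneg_nonneg; lia.
  have := Z.mul_le_mono_nonneg_r (Su + Sv) (P - 1) (P * mx) mx_ge0 ltac:(lia).
  lia.
have lt_mx : r * M * P < P * mx.
  have le1 : r * M * P <= (P - 1) * mx.
    by apply/(Z.mul_le_mono_pos_r _ _ P P_gt0); nia.
  have : 0 < r * M * P by apply: Z.mul_pos_pos; [apply: Z.mul_pos_pos|].
  nia.
by apply/(Z.mul_lt_mono_pos_r P); nia.
Qed.

Lemma height_cross_coprime x z x' z' : Z.gcd x z = 1 -> Z.gcd x' z' = 1 ->
  x * z' = x' * z -> height x z = height x' z'.
Proof.
move=> cop cop' cross.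
have dvd_x : (x | x') by apply: (Z.gauss _ z); [exists z'; lia | ].
have dvd_x' : (x' | x) by apply: (Z.gauss _ z'); [exists z; lia | ].
have dvd_z : (z | z') by apply: (Z.gauss _ x); [exists x'; lia | rewrite Z.gcd_comm].
have dvd_z' : (z' | z) by apply: (Z.gauss _ x'); [exists x; lia | rewrite Z.gcd_comm].
by rewrite /height (Z.divide_antisym_abs _ _ dvd_x dvd_x') (Z.divide_antisym_abs _ _ dvd_z dvd_z').
Qed.

Definition quarticZ (x z : Z) : Z := (x ^ 2 - x * z - 3 * z ^ 2) * (x ^ 2 + 2 * x * z - 12 * z ^ 2).

Definition coefA : seq Z :=
  [:: -62208; 66096; 25920; -56736; 19008; 3240; -2544; 72; 144; -21].
Definition coefB : seq Z :=
  [:: -27216; 31104; 2592; -15264; 3240; 3168; -1576; 120; 51; -8].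
Definition coefW : seq Z :=
  [:: 45349632; -362797056; 806215680; -924908544; 641426688; -225566208;
      -54577152; 119155968; -69223392; 19859328; -1516032; -1044288; 494928;
      -118944; 17280; -1296; 27].

Definition formA (x z : Z) : Z := heval coefA x z.
Definition formB (x z : Z) : Z := heval coefB x z.
Definition formW (x z : Z) : Z := heval coefW x z.

Definition bezout_const : Z := 1397440512.

Definition coefUx : seq Z :=
  [:: -1488625252208640; 1246561614489600; 529649598836736; -676260786926592;
      -33168297581568; 164871613804032; -34981960375296; -4570623127296; 1379078203392].
Definition coefVx : seq Z :=
  [:: 3402572005048320; -2575862725570560; -2220790707283968; 2430816462581760;
      -284129291234304; -270472736646144; 55270629904896; 13742167974912; -3620254963968].
Definition coefUz : seq Z :=
  [:: -465567768; 294542352; 197440236; -161032484; -28193874; 40201260; -6121303;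
      -1183335; 260520].
Definition coefVz : seq Z :=
  [:: 1064103552; -587785896; -749784816; 588961812; -19747548; -67104702; 8759436;
      3435975; -683865].

Ltac expand_forms :=
  rewrite /formA /formB /formW /coefA /coefB /coefW /coefUx /coefVx /coefUz /coefVz;
  cbn [heval size Z.of_nat Pos.of_succ_nat Pos.succ].

Lemma quarticZ_formAB x z : quarticZ (formA x z) (formB x z) = quarticZ x z * formW x z ^ 2.
Proof. rewrite /quarticZ; expand_forms; ring. Qed.

Lemma bezout_formAB_x x z :
  heval coefUx x z * formA x z + heval coefVx x z * formB x z = bezout_const * x ^ 17.
Proof. rewrite /bezout_const; expand_forms; ring. Qed.

Lemma bezout_formAB_z x z :
  heval coefUz x z * formA x z + heval coefVz x z * formB x z = bezout_const * z ^ 17.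
Proof. rewrite /bezout_const; expand_forms; ring. Qed.

Lemma formA_opp x z : formA (- x) (- z) = - formA x z.
Proof. expand_forms; ring. Qed.

Lemma formB_opp x z : formB (- x) (- z) = - formB x z.
Proof. expand_forms; ring. Qed.

Lemma gcd_formAB_dvd x z : Z.gcd x z = 1 -> (Z.gcd (formA x z) (formB x z) | bezout_const).
Proof.
by move=> cop; apply: gcd_dvd_of_bezout cop (bezout_formAB_x x z) (bezout_formAB_z x z).
Qed.

Definition grows (x z : Z) : Prop :=
  Z.gcd (formA x z) (formB x z) * height x z < height (formA x z) (formB x z).

(* Since [gcd A B] divides [bezout_const], starting the gcd computation there gives the
   same value while keeping all intermediate numbers small. *)
Definition growsb (x z : Z) : bool :=
  let a := formA x z in let b := formB x z in
  (Z.gcd x z =? 1) ==> (Z.gcd (Z.gcd bezout_const a) b * height x z <? height a b).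

Lemma growsbP x z : Z.gcd x z = 1 -> growsb x z -> grows x z.
Proof.
move=> cop; rewrite /growsb /grows cop Z.eqb_refl => /Z.ltb_lt.
rewrite -Z.gcd_assoc Z.gcd_comm.
by have /(Z.divide_gcd_iff _ _ (Z.gcd_nonneg _ _)) -> := gcd_formAB_dvd cop.
Qed.

Definition Zrange (a : Z) (n : nat) : seq Z := [seq a + Z.of_nat i | i <- iota 0 n].

Lemma mem_Zrange a n x : a <= x < a + Z.of_nat n -> x \in Zrange a n.
Proof.
move=> x_in; apply/mapP; exists (Z.to_nat (x - a)); last lia.
by rewrite mem_iota; lia.
Qed.

Lemma growsb_small_heights :
  all (fun x => all (growsb x) (Zrange 0 (Z.to_nat (Z.max (Z.abs x) 16)).+1)) (Zrange (-105) 211).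
Proof. by vm_compute. Qed.

Lemma grows_of_bezout x z cu cv t : Z.gcd x z = 1 -> Z.abs t = height x z ->
  heval cu x z * formA x z + heval cv x z * formB x z = bezout_const * t ^ 17 ->
  size cu = 9%N -> size cv = 9%N -> coef_norm cu + coef_norm cv < height x z ^ 8 ->
  grows x z.
Proof.
move=> cop abs_t bez size_u size_v small_norm.
have M_gt0 : 0 < height x z.
  rewrite /height; case: (Z.eq_dec x 0) cop => [-> | x_neq0] cop; last lia.
  by rewrite Z.gcd_0_l in cop; lia.
have le_xM : Z.abs x <= height x z by apply: Z.le_max_l.
have le_zM : Z.abs z <= height x z by apply: Z.le_max_r.
have := heval_bound (c := cu) le_xM le_zM; have := heval_bound (c := cv) le_xM le_zM.
rewrite size_u size_v /= => le_v le_u.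
have r_gt0 : 0 < bezout_const by rewrite /bezout_const; lia.
have := height_gt_of_bezout (k := 8) ltac:(lia) r_gt0 M_gt0 abs_t bez le_u le_v small_norm.
have g_le : Z.gcd (formA x z) (formB x z) <= bezout_const.
  by apply: Z.divide_pos_le r_gt0 _; exact: gcd_formAB_dvd.
rewrite /grows; nia.
Qed.

Lemma coef_norm_bezout_x : coef_norm coefUx + coef_norm coefVx < 106 ^ 8.
Proof. by vm_compute. Qed.

Lemma coef_norm_bezout_z : coef_norm coefUz + coef_norm coefVz < 17 ^ 8.
Proof. by vm_compute. Qed.

Lemma grows_z_ge0 x z : Z.gcd x z = 1 -> 0 <= z -> grows x z.
Proof.
move=> cop z_ge0.
have by_check : Z.abs x <= 105 -> z <= Z.max (Z.abs x) 16 -> grows x z.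
  move=> x_small z_small; apply: growsbP => //.
  have x_in : x \in Zrange (-105) 211 by apply: mem_Zrange; lia.
  have z_in : z \in Zrange 0 (Z.to_nat (Z.max (Z.abs x) 16)).+1 by apply: mem_Zrange; lia.
  by move/allP: growsb_small_heights => /(_ x x_in) /allP; apply.
have [z_le | z_gt] := Z_le_gt_dec z (Z.abs x).
  have [x_large | x_small] := Z_le_gt_dec 106 (Z.abs x); last by apply: by_check; lia.
  apply: (grows_of_bezout cop _ (bezout_formAB_x x z)) => //; rewrite /height; first lia.
  apply: (Z.lt_le_trans _ _ _ coef_norm_bezout_x); apply: Z.pow_le_mono_l; lia.
have [z_large | z_small] := Z_le_gt_dec 17 z; last by apply: by_check; lia.
apply: (grows_of_bezout cop _ (bezout_formAB_z x z)) => //; rewrite /height; first lia.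
apply: (Z.lt_le_trans _ _ _ coef_norm_bezout_z); apply: Z.pow_le_mono_l; lia.
Qed.

Lemma grows_coprime x z : Z.gcd x z = 1 -> grows x z.
Proof.
move=> cop; have [z_ge0 | z_lt0] := Z_le_gt_dec 0 z; first exact: grows_z_ge0.
have := @grows_z_ge0 (- x) (- z); rewrite Z.gcd_opp_l Z.gcd_opp_r => /(_ cop).
rewrite /grows /height !formA_opp !formB_opp Z.gcd_opp_l Z.gcd_opp_r !Z.abs_opp.
by apply; lia.
Qed.

Definition primitive (p : Z * Z) : Prop := Z.gcd p.1 p.2 = 1.

Definition step (p : Z * Z) : Z * Z :=
  let g := Z.gcd (formA p.1 p.2) (formB p.1 p.2) in (formA p.1 p.2 / g, formB p.1 p.2 / g).

Section Step.

Variable p : Z * Z.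
Hypothesis cop : primitive p.
Let g := Z.gcd (formA p.1 p.2) (formB p.1 p.2).

Lemma gcd_formAB_gt0 : 0 < g.
Proof.
have := grows_coprime cop; rewrite /grows -/g.
have [g0 | g_neq0] := Z.eq_dec g 0.
  by move: (g0) => /Z.gcd_eq_0 [-> ->]; rewrite g0.
by have := Z.gcd_nonneg (formA p.1 p.2) (formB p.1 p.2); lia.
Qed.

Lemma formAB_step : formA p.1 p.2 = g * (step p).1 /\ formB p.1 p.2 = g * (step p).2.
Proof.
by split; apply: Zdivide_Zdiv_eq gcd_formAB_gt0 _;
  [apply: Z.gcd_divide_l | apply: Z.gcd_divide_r].
Qed.

Lemma step_primitive : primitive (step p).
Proof. by apply: Z.gcd_div_gcd => //; have := gcd_formAB_gt0; rewrite /g; lia. Qed.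

Lemma step_height : height p.1 p.2 < height (step p).1 (step p).2.
Proof.
have g_gt0 := gcd_formAB_gt0; have := grows_coprime cop.
rewrite /grows -/g /height; case: formAB_step => -> ->.
rewrite !Z.abs_mul (Z.abs_eq g) ?Z.mul_max_distr_nonneg_l; try lia.
exact: (proj2 (Z.mul_lt_mono_pos_l g _ _ g_gt0)).
Qed.

End Step.

Section Orbit.

Variable f : Z * Z -> Z * Z.
Hypothesis f_primitive : forall p, primitive p -> primitive (f p).
Hypothesis f_height : forall p, primitive p -> height p.1 p.2 < height (f p).1 (f p).2.
Variable p : Z * Z.
Hypothesis p_primitive : primitive p.

Lemma iter_primitive n : primitive (iter n f p).
Proof. by elim: n => [|n IH] //=; apply: f_primitive. Qed.

Lemma iter_height_lt m n : (m < n)%N ->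
  height (iter m f p).1 (iter m f p).2 < height (iter n f p).1 (iter n f p).2.
Proof.
elim: n => [|n IH] //; rewrite ltnS leq_eqVlt => /orP [/eqP -> | /IH lt_mn].
  exact: f_height (iter_primitive n).
by have := f_height (iter_primitive n); rewrite /=; lia.
Qed.

Lemma iter_cross_inj m n :
  (iter m f p).1 * (iter n f p).2 = (iter n f p).1 * (iter m f p).2 -> m = n.
Proof.
move=> /(height_cross_coprime (iter_primitive m) (iter_primitive n)) eq_h.
have [lt_mn | lt_nm | //] := ltngtP m n.
  by have := iter_height_lt lt_mn; lia.
by have := iter_height_lt lt_nm; lia.
Qed.

End Orbit.

Local Close Scope Z_scope.
Local Open Scope ring_scope.

Definition ratZ (n : Z) : rat := (int_of_Z n)%:~R.

HB.instance Definition _ := GRing.RMorphism.copy ratZ (intr \o int_of_Z).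

Lemma ratZ_inj : injective ratZ.
Proof. by move=> m n /eqP; rewrite /ratZ eqr_int => /eqP /(can_inj int_of_ZK). Qed.

Lemma ratZ_eq0 n : (ratZ n == 0) = (n == 0%R).
Proof. by rewrite -(rmorph0 ratZ) (inj_eq ratZ_inj). Qed.

Lemma ratZ_div m n : Z.divide n m -> ratZ (Z.div m n) = ratZ m / ratZ n.
Proof.
move=> [k ->]; have [-> | n_neq0] := Z.eq_dec n 0; first by rewrite Z.mul_0_r rmorph0 mul0r.
by rewrite Z.div_mul // rmorphM mulfK // ratZ_eq0; apply/eqP.
Qed.

Lemma ratZ_quartic x z : ratZ (quarticZ x z) = Fhom (ratZ x) (ratZ z).
Proof.
rewrite /quarticZ /Fhom !(rmorphM, rmorphB, rmorphD, rmorph1).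
by rewrite /ratZ /=; ring.
Qed.

Lemma Fhom_scale c X W : Fhom (c * X) (c * W) = c ^+ 4 * Fhom X W.
Proof. by rewrite /Fhom; ring. Qed.

Lemma Fhom_formAB x z :
  Fhom (ratZ (formA x z)) (ratZ (formB x z)) = Fhom (ratZ x) (ratZ z) * ratZ (formW x z) ^+ 2.
Proof. by rewrite -!ratZ_quartic quarticZ_formAB !rmorphM rmorph1 mulr1. Qed.

Definition on_curve (d : int) (p : Z * Z) : Prop :=
  exists Y : rat, d%:~R * Y ^+ 2 = Fhom (ratZ p.1) (ratZ p.2).

Lemma on_curve_step d p : primitive p -> on_curve d p -> on_curve d (step p).
Proof.
move=> cop [Y onY]; move: (formAB_step cop) (gcd_formAB_gt0 cop).
set g := Z.gcd _ _; clearbody g => -[eA eB] g_gt0.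
have g_neq0 : ratZ g != 0 by rewrite ratZ_eq0; apply/eqP; lia.
have := Fhom_formAB p.1 p.2; rewrite eA eB !rmorphM Fhom_scale -onY => eq_F.
exists (Y * ratZ (formW p.1 p.2) / ratZ g ^+ 2).
by apply: (mulfI (expf_neq0 4 g_neq0)); rewrite eq_F; field.
Qed.

Lemma primitive_representative (u v : rat) : (u, v) != (0, 0) ->
  exists (c : rat) (p : Z * Z), [/\ primitive p, ratZ p.1 = c * u & ratZ p.2 = c * v].
Proof.
move=> uv_neq0; set D : int := denq u * denq v.
have D_neq0 : (D%:~R : rat) != 0 by rewrite intr_eq0 mulf_neq0 ?denq_neq0.
set m := Z_of_int (numq u * denq v); set n := Z_of_int (numq v * denq u).
have ratZ_m : ratZ m = D%:~R * u.
  by rewrite /ratZ /m Z_of_intK intrM numqE /D intrM; ring.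
have ratZ_n : ratZ n = D%:~R * v.
  by rewrite /ratZ /n Z_of_intK intrM numqE /D intrM; ring.
set g := Z.gcd m n.
have g_neq0 : g <> Z0.
  move=> /Z.gcd_eq_0 [m0 n0]; move/eqP: uv_neq0; apply.
  move: ratZ_m ratZ_n; rewrite m0 n0 rmorph0 => /esym/eqP + /esym/eqP.
  by rewrite !mulf_eq0 (negPf D_neq0) => /eqP-> /eqP->.
exists (D%:~R / ratZ g), (Z.div m g, Z.div n g); split => /=.
- exact: Z.gcd_div_gcd.
- by rewrite ratZ_div ?ratZ_m 1?mulrAC; last exact: Z.gcd_divide_l.
- by rewrite ratZ_div ?ratZ_n 1?mulrAC; last exact: Z.gcd_divide_r.
Qed.

Lemma wequiv_cross q p p' : wequiv q p -> wequiv q p' -> p.1.1 * p'.2 = p'.1.1 * p.2.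
Proof. by case: q => [[X Y] W] [l [_ ->]] [l' [_ ->]] /=; ring. Qed.

Lemma Hd_triple_base_neq0 d X Y W : d != 0 -> Hd_triple d (X, Y, W) -> (X, W) != (0, 0).
Proof.
move=> d_neq0 [pt_neq0 onH]; apply: contraNneq pt_neq0 => -[X0 W0]; move: onH.
rewrite X0 W0 /Fhom !(mul0r, expr0n, subrr) => /eqP.
by rewrite mulf_eq0 intr_eq0 (negPf d_neq0) sqrf_eq0 => /eqP ->.
Qed.

Lemma primitive_ratZ_neq0 p (Y : rat) : primitive p -> (ratZ p.1, Y, ratZ p.2) != (0, 0, 0).
Proof.
rewrite /primitive; case: p => x z /= cop; apply/negP => /eqP [/eqP x0 _ /eqP z0].
by move: x0 z0 cop; rewrite !ratZ_eq0 => /eqP -> /eqP ->.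
Qed.

Theorem mainTheorem9 (d : int) :
  squarefree_int d -> Hd_nonempty d -> Hd_infinite d.
Proof.
move=> [d_neq0 _] [[[X Y] W] pt] s.
have [c [p0 [p0_prim ratZ_x ratZ_z]]] :=
  primitive_representative (Hd_triple_base_neq0 d_neq0 pt).
have p0_on : on_curve d p0.
  by exists (c ^+ 2 * Y); rewrite ratZ_x ratZ_z Fhom_scale -pt.2; ring.
pose orbit n := iter n step p0.
have orbit_prim n : primitive (orbit n) := iter_primitive (@step_primitive) p0_prim n.
have orbit_on n : on_curve d (orbit n).
  by elim: n => // n IH; apply: on_curve_step (orbit_prim n) IH.
pose hits q n := exists Y, wequiv q (ratZ (orbit n).1, Y, ratZ (orbit n).2).
have hits_fun q m n : hits q m -> hits q n -> m = n.
  move=> [Ym eqm] [Yn eqn]; apply: (iter_cross_inj (@step_primitive) (@step_height) p0_prim).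
  by apply: ratZ_inj; rewrite !rmorphM; apply: wequiv_cross eqm eqn.
have [N N_bound] := functional_rel_bounded s hits_fun.
have [YN onN] := orbit_on N.
exists (ratZ (orbit N).1, YN, ratZ (orbit N).2).
split; first by split; [apply: primitive_ratZ_neq0 | exact: onN].
by move=> q q_in eqv; have := N_bound q N q_in (ex_intro _ YN eqv); rewrite ltnn.
Qed.
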